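(* Let $\tilde p,\tilde d\in C^{2}((0,1],\mathbb{R})$, $\tilde b\in C^2((0,1],\mathbb{C})$, $\tilde c\in C^1((0,1],\mathbb{C})$, $\tilde q\in C((0,1],\mathbb{R})$ with $\tilde p>0$ on $(0,1]$, and $w_1,w_2\in C^2((0,1],\mathbb{R})$ with $w:=w_1w_2>0$ on $(0,1)$. Assume: ($\tilde{\mathrm B}$1) the (possibly improper) limit $\tilde d_0:=\lim_{x\to0+}\tilde d(x)$ exists; ($\tilde{\mathrm B}$2) there are $\tilde\beta,\tilde\gamma>0$ with $|\tilde b(x)/x|\le\tilde\beta(|\tilde d(x)|+1)$, $|\tilde c(x)|\le\tilde\gamma(|\tilde d(x)|+1)$ for all $x\in(0,1]$; ($\tilde{\mathrm B}$3a) for some $\lambda\in\mathbb{R}\setminus\{\tilde d_0\}$ there is $x_\lambda\in(0,1)$ such that $\tilde\pi(x,\lambda)/x^2$ is bounded on $(0,x_\lambda]$; ($\tilde{\mathrm B}$3b) for all $\lambda\in\mathbb{R}\setminus(\overline{\tilde\Delta((0,1])}\cup\{\tilde d_0\})$ there is $x_\lambda\in(0,1)$ such that $x^2/\tilde\pi(x,\lambda)$, $\tilde\rho(x,\lambda)/x$, $\tilde\kappa(x,\lambda)$ are (defined and) bounded on $(0,x_\lambda]$; ($\tilde{\mathrm C}$1) for $\lambda\in\mathbb{R}\setminus(\overline{\tilde\Delta((0,1])}\cup\{\tilde d_0\})$ the limits $\tilde\rho_0(\lambda):=\lim_{x\to0+}\frac{x\tilde\rho(x,\lambda)}{\tilde\pi(x,\lambda)}$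 and $\tilde\kappa_0(\lambda):=\lim_{x\to0+}\frac{x^2\tilde\kappa(x,\lambda)}{\tilde\pi(x,\lambda)}$ exist and are finite; ($\tilde{\mathrm C}$2) the limit $\lim_{x\to0+}\frac{x^2w''(x)}{w(x)}$ exists and is finite. Let $W(t):=1+e^{-t}\frac{w'(e^{-t})}{w(e^{-t})}$, $t\in[0,\infty)$. Then for $\lambda\in\mathbb{R}\setminus(\overline{\tilde\Delta((0,1])}\cup\{\tilde d_0\})$, $$\lim_{x\to0+}x\frac{\frac{\partial}{\partial x}\tilde\pi(x,\lambda)}{\tilde\pi(x,\lambda)}=2,$$ $\lim_{t\to\infty}W(t)$ exists and is finite, $\lim_{t\to\infty}W'(t)=0$, and $\operatorname{Im}\tilde\rho_0(\lambda)=1+\lim_{t\to\infty}W(t)$.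
   Context: Definitions (for $x\in(0,1]$ with $\tilde d(x)\ne\lambda$): $\tilde\pi(x,\lambda):=\frac{w_2}{w_1}\tilde p-\frac{|\tilde b|^2}{\tilde d-\lambda}$; $\tilde\rho(x,\lambda):=-\frac{2\operatorname{Im}(\tilde b\overline{\tilde c})}{\tilde d-\lambda}+i\frac1w\frac{\partial}{\partial x}(w\tilde\pi(\cdot,\lambda))$; $\tilde\kappa(x,\lambda):=\tilde q-\lambda-\frac{|\tilde c|^2}{\tilde d-\lambda}+\frac1w\Big(w\frac{\overline{\tilde b}\tilde c}{\tilde d-\lambda}\Big)'-\frac{(\tilde p w_2')'}{w_1}$; $\tilde\Delta(x):=\tilde d(x)-\frac{w_1(x)}{w_2(x)}\frac{|\tilde b(x)|^2}{\tilde p(x)}$. Overline on a set denotes closure in $\mathbb{R}$. *)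

From Stdlib Require Import Reals.
From Coquelicot Require Import Coquelicot.
Open Scope R_scope.

Definition Ck_oc (k : nat) (f : R -> R) : Prop :=
  (forall j, (j < k)%nat -> forall x, 0 < x < 1 -> ex_derive (Derive_n f j) x) /\
  (forall j, (j <= k)%nat -> forall x, 0 < x < 1 -> continuous (Derive_n f j) x) /\
  (forall j, (j <= k)%nat -> exists l : R, filterlim (Derive_n f j) (at_left 1) (locally l)) /\
  filterlim f (at_left 1) (locally (f 1)).

Definition Ck_oc_C (k : nat) (f : R -> C) : Prop :=
  Ck_oc k (fun x => Re (f x)) /\ Ck_oc k (fun x => Im (f x)).

Definition CDerive (g : R -> C) (x : R) : C :=
  (Derive (fun y => Re (g y)) x, Derive (fun y => Im (g y)) x).

Definition in_closure (S : R -> Prop) (l : R) : Prop :=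
  forall eps : R, 0 < eps -> exists y, S y /\ Rabs (y - l) < eps.

Section Defs.
Variables (p d q w1 w2 : R -> R) (b c : R -> C).

Definition wt (x : R) : R := w1 x * w2 x.

Definition pit (x lam : R) : R :=
  w2 x / w1 x * p x - (Cmod (b x)) ^ 2 / (d x - lam).

Definition rho_im (x lam : R) : R :=
  / wt x * Derive (fun y => wt y * pit y lam) x.

Definition rhot (x lam : R) : C :=
  (RtoC (- 2 * Im (b x * Cconj (c x)) / (d x - lam)) + Ci * RtoC (rho_im x lam))%C.

Definition pw2_term (x : R) : R := Derive (fun y => p y * Derive w2 y) x / w1 x.

Definition kappat (x lam : R) : C :=
  (RtoC (q x - lam - (Cmod (c x)) ^ 2 / (d x - lam))
   + RtoC (/ wt x) * CDerive (fun y => RtoC (wt y) * (Cconj (b y) * c y) / RtoC (d y - lam)) x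
   - RtoC (pw2_term x))%C.

Definition Deltat (x : R) : R :=
  d x - w1 x / w2 x * (Cmod (b x)) ^ 2 / p x.

(* the image Delta((0,1]) (at points where Delta is defined, i.e. w2 x <> 0) *)
Definition Delta_img (y : R) : Prop :=
  exists x, 0 < x <= 1 /\ w2 x <> 0 /\ y = Deltat x.

Definition Wfun (t : R) : R :=
  1 + exp (- t) * Derive wt (exp (- t)) / wt (exp (- t)).

End Defs.

(* Substitute t = -ln x.  Then u := W - 1, i.e. x w'/w, solves the Riccati equation
   u' = u^2 - u - G with G(t) = x^2 w''/w -> L by (C2).  Such a solution neither escapes to
   +oo (-1/u would blow up in finite time) nor to -oo, and it eventually stays on one side of
   every non-root of v^2 - v - L; hence it converges to a root r, and W' = u^2 - u - G -> 0.
   Next, Im (x rho / pi) = x w'/w + x pi'/pi, so x pi'/pi -> Im rho0 - r.  Finally pi(x, lam)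
   is comparable to x^2 near 0: from below by (B3b), from above by (B3a) at lam0, since
   pi(., lam) - pi(., lam0) = |b|^2 (lam0 - lam) / ((d - lam) (d - lam0)) = O(x^2) by (B1),
   (B2).  Then ln (pi^2) - 4 ln x is bounded, which forces x pi'/pi -> 2. *)

From Stdlib Require Import Reals Lra Psatz Classical.
From Coquelicot Require Import Coquelicot.
Open Scope R_scope.

Lemma filterlim_pinfty_locally (f : R -> R) (l : R) :
  filterlim f (Rbar_locally p_infty) (locally l) <->
  (forall eps, 0 < eps -> exists T, forall s, T < s -> Rabs (f s - l) < eps).
Proof.
  rewrite filterlim_locally; split.
  - intros H eps Heps. destruct (H (mkposreal eps Heps)) as [T HT].
    exists T. intros s Hs. apply (HT s Hs).
  - intros H eps. destruct (H eps (cond_pos eps)) as [T HT].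
    exists T. intros s Hs. apply (HT s Hs).
Qed.

Lemma at_right0_iff (Q : R -> Prop) :
  at_right 0 Q <-> exists del, 0 < del /\ forall x, 0 < x < del -> Q x.
Proof.
  split.
  - intros [del H]. exists del; split; [apply cond_pos|].
    intros x [Hx0 Hx]. apply H; [|exact Hx0].
    change (Rabs (x - 0) < del). rewrite Rminus_0_r, Rabs_pos_eq; lra.
  - intros [del [Hdel H]]. exists (mkposreal del Hdel). intros x Hx Hx0.
    change (Rabs (x - 0) < del) in Hx. rewrite Rminus_0_r, Rabs_pos_eq in Hx by lra.
    apply H; lra.
Qed.

Lemma at_right0_of_le (Q : R -> Prop) (del : R) :
  0 < del -> (forall x, 0 < x <= del -> Q x) -> at_right 0 Q.
Proof.
  intros Hdel HQ. apply at_right0_iff. exists del. split; [exact Hdel|]. intros x Hx. apply HQ. lra.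
Qed.

Lemma at_right0_lt_1 : at_right 0 (fun x => 0 < x < 1).
Proof. apply (at_right0_of_le _ (1 / 2)); [lra|intros; lra]. Qed.

Lemma filterlim_exp_opp_pinfty :
  filterlim (fun s => exp (- s)) (Rbar_locally p_infty) (at_right 0).
Proof.
  intros Q [del HQ]. exists (- ln del). intros s Hs. apply HQ; [|apply exp_pos].
  change (Rabs (exp (- s) - 0) < del).
  rewrite Rminus_0_r, Rabs_pos_eq by (left; apply exp_pos).
  rewrite <- (exp_ln del) by apply cond_pos. apply exp_increasing. lra.
Qed.

Lemma filterlim_opp_ln_at_right0 :
  filterlim (fun x => - ln x) (at_right 0) (Rbar_locally p_infty).
Proof. eapply filterlim_comp; [exact is_lim_ln_0 | exact (filterlim_Rbar_opp m_infty)]. Qed.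

Lemma filterlim_Im (z : C) : filterlim Im (locally z) (locally (Im z)).
Proof. destruct z as [x y]. apply continuous_snd. Qed.

Lemma filterlim_Rminus {T : Type} {F : (T -> Prop) -> Prop} {FF : Filter F}
  (f g : T -> R) (a b : R) :
  filterlim f F (locally a) -> filterlim g F (locally b) ->
  filterlim (fun x => f x - g x) F (locally (a - b)).
Proof.
  intros Hf Hg.
  apply (filterlim_comp_2 f (fun x => opp (g x)) plus Hf
           (filterlim_comp _ _ _ g opp _ _ _ Hg (filterlim_opp b))
           (filterlim_plus (K := R_AbsRing) a (opp b))).
Qed.

Lemma MVT_interval (f df : R -> R) (a b : R) : a < b ->
  (forall x, a <= x <= b -> is_derive f x (df x)) ->
  exists c, a <= c <= b /\ f b - f a = df c * (b - a).
Proof.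
  intros Hab Hd. destruct (MVT_gen f a b df) as [c [Hc Heq]].
  - intros x Hx. rewrite Rmin_left, Rmax_right in Hx by lra. apply Hd; lra.
  - intros x Hx. rewrite Rmin_left, Rmax_right in Hx by lra.
    apply derivable_continuous_pt. exists (df x). apply is_derive_Reals, Hd; lra.
  - exists c. rewrite Rmin_left, Rmax_right in Hc by lra. auto.
Qed.

Lemma bounded_derivative_limit_zero (f df : R -> R) (S0 A B a : R) :
  (forall s, S0 < s -> is_derive f s (df s)) ->
  (forall s, S0 < s -> A <= f s <= B) ->
  filterlim df (Rbar_locally p_infty) (locally a) -> a = 0.
Proof.
  intros Hd Hb Hlim. apply NNPP. intros Ha.
  assert (Habs : 0 < Rabs a) by (apply Rabs_pos_lt; exact Ha).
  destruct (proj1 (filterlim_pinfty_locally df a) Hlim (Rabs a / 2)) as [T HT]; [lra|].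
  set (s1 := Rmax S0 T + 1).
  assert (HS0 : S0 < s1) by (unfold s1; pose proof (Rmax_l S0 T); lra).
  assert (HT1 : T < s1) by (unfold s1; pose proof (Rmax_r S0 T); lra).
  set (len := 2 * (B - A + 1) / Rabs a).
  assert (HAB : A <= B) by (destruct (Hb s1 HS0); lra).
  assert (Hlen : 0 < len) by (unfold len; apply Rdiv_lt_0_compat; lra).
  destruct (MVT_interval f df s1 (s1 + len)) as [c [Hc Heq]]; [lra|intros; apply Hd; lra|].
  assert (Hdc : Rabs a / 2 <= Rabs (df c)).
  { assert (Hq := HT c ltac:(lra)).
    pose proof (Rabs_triang_inv a (a - df c)) as Htri. rewrite Rabs_minus_sym in Hq.
    replace (a - (a - df c)) with (df c) in Htri by ring. lra. }
  assert (Hmove : B - A + 1 <= Rabs (f (s1 + len) - f s1)).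
  { rewrite Heq, Rabs_mult, (Rabs_pos_eq (s1 + len - s1)) by lra.
    replace (s1 + len - s1) with len by ring.
    apply Rle_trans with (Rabs a / 2 * len); [|apply Rmult_le_compat_r; lra].
    unfold len. right. field. lra. }
  destruct (Hb s1 HS0), (Hb (s1 + len) ltac:(lra)).
  assert (Rabs (f (s1 + len) - f s1) <= B - A) by (apply Rabs_le; lra). lra.
Qed.

Lemma is_derive_pos_right (f : R -> R) (x l : R) :
  is_derive f x l -> 0 < l -> exists del, 0 < del /\ forall h, 0 < h < del -> f x < f (x + h).
Proof.
  intros H Hl. apply is_derive_Reals in H. destruct (H l Hl) as [del Hdel].
  exists del. split; [apply cond_pos|]. intros h Hh.
  assert (Hq := Hdel h ltac:(lra) ltac:(rewrite Rabs_pos_eq; lra)). apply Rabs_def2 in Hq.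
  assert (0 < (f (x + h) - f x) / h) by lra.
  assert (f (x + h) - f x = (f (x + h) - f x) / h * h) by (field; lra). nra.
Qed.

Lemma exists_nonneg_right (phi : R -> R) (m dm s2 : R) :
  is_derive phi m dm -> (phi m = 0 -> 0 < dm) -> 0 <= phi m -> m < s2 ->
  exists h, 0 < h <= s2 - m /\ 0 <= phi (m + h).
Proof.
  intros Hd Hz Hm Hms.
  assert (exists del, 0 < del /\ forall h, 0 < h < del -> 0 <= phi (m + h)) as [del [Hdel Hright]].
  { destruct (Rlt_or_le 0 (phi m)) as [Hpos|Hzero].
    - assert (Hc : continuous phi m).
      { apply (ex_derive_continuous (K := R_AbsRing) (V := R_NormedModule)). exists dm. exact Hd. }
      destruct (Hc (fun y => 0 < y) (locally_interval _ _ 0 p_infty Hpos I (fun y Hy _ => Hy)))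
        as [del Hdel].
      exists del. split; [apply cond_pos|]. intros h Hh. left. apply Hdel.
      change (Rabs (m + h - m) < del). rewrite Rabs_pos_eq; lra.
    - destruct (is_derive_pos_right phi m dm Hd (Hz ltac:(lra))) as [del [Hdel Hright]].
      exists del. split; [exact Hdel|]. intros h Hh. specialize (Hright h Hh). lra. }
  set (h := Rmin (del / 2) (s2 - m)).
  assert (0 < h) by (apply Rmin_pos; lra).
  assert (h <= del / 2) by apply Rmin_l.
  exists h. split; [split; [lra|apply Rmin_r]|]. apply Hright. lra.
Qed.

Lemma nonneg_forward_invariant (phi dphi : R -> R) (S0 s1 s2 : R) :
  (forall s, S0 < s -> is_derive phi s (dphi s)) ->
  (forall s, S0 < s -> phi s = 0 -> 0 < dphi s) ->
  S0 < s1 -> s1 <= s2 -> 0 <= phi s1 -> 0 <= phi s2.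
Proof.
  intros Hd Hz Hs1 H12 H1. apply Rnot_lt_le. intros H2.
  set (E := fun t => s1 <= t <= s2 /\ 0 <= phi t).
  destruct (completeness E) as [m [Hub Hlub]].
  { exists s2. intros t Ht. apply Ht. }
  { exists s1. split; [lra|exact H1]. }
  assert (Hm1 : s1 <= m) by (apply Hub; split; [lra|exact H1]).
  assert (Hm2 : m <= s2) by (apply Hlub; intros t Ht; apply Ht).
  destruct (Rlt_or_le (phi m) 0) as [Hneg|Hnn].
  - assert (Hc : continuous phi m).
    { apply (ex_derive_continuous (K := R_AbsRing) (V := R_NormedModule)).
      exists (dphi m). apply Hd. lra. }
    destruct (Hc (fun y => y < 0) (locally_interval _ _ m_infty 0 I Hneg (fun y _ Hy => Hy)))
      as [del Hdel].
    assert (m <= m - del); [|pose proof (cond_pos del); lra].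
    apply Hlub. intros t [Ht Hpt]. apply Rnot_lt_le. intros Hlt.
    assert (t <= m) by (apply Hub; split; assumption).
    assert (phi t < 0) by (apply Hdel; change (Rabs (t - m) < del); rewrite Rabs_left1; lra).
    lra.
  - assert (Hms : m < s2) by (destruct (Req_dec m s2) as [->|]; lra).
    destruct (exists_nonneg_right phi m (dphi m) s2 (Hd m ltac:(lra)) (Hz m ltac:(lra)) Hnn Hms)
      as [h [Hh Hph]].
    assert (m + h <= m) by (apply Hub; split; [lra|exact Hph]). lra.
Qed.

Lemma exists_nonroot_in_interval (L a b : R) :
  a < b -> exists v, a < v < b /\ v ^ 2 - v - L <> 0.
Proof.
  intros Hab.
  set (x1 := a + (b - a) / 4). set (x2 := (a + b) / 2). set (x3 := a + 3 * (b - a) / 4).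
  destruct (classic (x1 ^ 2 - x1 - L = 0)) as [H1|H1];
    [|exists x1; split; [unfold x1; lra|exact H1]].
  destruct (classic (x2 ^ 2 - x2 - L = 0)) as [H2|H2];
    [|exists x2; split; [unfold x2; lra|exact H2]].
  destruct (classic (x3 ^ 2 - x3 - L = 0)) as [H3|H3];
    [|exists x3; split; [unfold x3; lra|exact H3]].
  (* two distinct roots of [v^2 - v - L] sum to 1, which [x1] cannot do with both [x2] and [x3] *)
  assert (Hx12 : (x1 - x2) * (x1 + x2 - 1) = 0) by nra.
  assert (Hx13 : (x1 - x3) * (x1 + x3 - 1) = 0) by nra.
  apply Rmult_integral in Hx12. apply Rmult_integral in Hx13.
  exfalso. unfold x1, x2, x3 in *. destruct Hx12, Hx13; lra.
Qed.

Lemma exists_gt3 (a b c : R) : exists t, a < t /\ b < t /\ c < t.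
Proof.
  exists (Rmax a (Rmax b c) + 1).
  pose proof (Rmax_l a (Rmax b c)). pose proof (Rmax_r a (Rmax b c)).
  pose proof (Rmax_l b c). pose proof (Rmax_r b c). lra.
Qed.

Section Riccati.

Variables (u G : R -> R) (S0 L : R).
Hypothesis u_riccati : forall s, S0 < s -> is_derive u s (u s ^ 2 - u s - G s).
Hypothesis G_limit : filterlim G (Rbar_locally p_infty) (locally L).

Lemma riccati_eventually_one_side (v : R) : v ^ 2 - v - L <> 0 ->
  exists T, (forall s, T < s -> v <= u s) \/ (forall s, T < s -> u s <= v).
Proof.
  intros Hv.
  destruct (proj1 (filterlim_pinfty_locally G L) G_limit (Rabs (v ^ 2 - v - L)))
    as [T1 HT1]; [apply Rabs_pos_lt; exact Hv|].
  set (S := Rmax S0 T1).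
  assert (HS0 : S0 <= S) by apply Rmax_l. assert (HS1 : T1 <= S) by apply Rmax_r.
  (* at [u = v], [u'] has the sign of [v^2 - v - L], so [u] crosses [v] only one way *)
  destruct (Rlt_or_le 0 (v ^ 2 - v - L)) as [Ha|Ha].
  - rewrite Rabs_pos_eq in HT1 by lra.
    destruct (classic (exists s1, S < s1 /\ v <= u s1)) as [[s1 [Hs1 Hvs]]|Hnever].
    + exists s1. left. intros s Hs.
      enough (0 <= u s - v) by lra.
      apply (nonneg_forward_invariant (fun s => u s - v) (fun s => u s ^ 2 - u s - G s) S s1);
        try lra.
      * intros t Ht. rewrite <- (Rminus_0_r (u t ^ 2 - u t - G t)).
        apply (is_derive_minus u (fun _ => v)); [apply u_riccati; lra|exact (is_derive_const v t)].
      * intros t Ht Hz. replace (u t) with v by lra.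
        specialize (HT1 t ltac:(lra)). apply Rabs_def2 in HT1. lra.
    + exists S. right. intros s Hs. apply Rnot_lt_le. intros Hlt.
      apply Hnever. exists s. split; lra.
  - assert (Ha' : v ^ 2 - v - L < 0) by (destruct Ha; [assumption|contradiction]).
    rewrite Rabs_left in HT1 by lra.
    destruct (classic (exists s1, S < s1 /\ u s1 <= v)) as [[s1 [Hs1 Hvs]]|Hnever].
    + exists s1. right. intros s Hs.
      enough (0 <= v - u s) by lra.
      apply (nonneg_forward_invariant (fun s => v - u s) (fun s => 0 - (u s ^ 2 - u s - G s)) S s1);
        try lra.
      * intros t Ht.
        apply (is_derive_minus (fun _ => v) u); [exact (is_derive_const v t)|apply u_riccati; lra].
      * intros t Ht Hz. replace (u t) with v by lra.
        specialize (HT1 t ltac:(lra)). apply Rabs_def2 in HT1. lra.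
    + exists S. left. intros s Hs. apply Rnot_lt_le. intros Hlt.
      apply Hnever. exists s. split; lra.
Qed.

Lemma riccati_forcing_eventually_le : exists T, forall s, T < s -> G s <= Rabs L + 1.
Proof.
  destruct (proj1 (filterlim_pinfty_locally G L) G_limit 1 Rlt_0_1) as [T HT].
  exists T. intros s Hs. specialize (HT s Hs). apply Rabs_def2 in HT.
  pose proof (Rle_abs L). lra.
Qed.

Lemma riccati_not_eventually_large : ~ exists T, forall s, T < s -> 2 * Rabs L + 4 <= u s.
Proof.
  intros [T HT]. destruct riccati_forcing_eventually_le as [T0 HG].
  destruct (exists_gt3 T S0 T0) as [T1 HT1].
  pose proof (Rabs_pos L).
  (* [-1/u] increases at rate at least [1/2] yet stays in [[-1, 0)]: [u] blows up in finite time *)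
  destruct (MVT_interval (fun y => - / u y) (fun y => (u y ^ 2 - u y - G y) / u y ^ 2) T1 (T1 + 4))
    as [c [Hc Heq]]; [lra| |].
  - intros x Hx. specialize (HT x ltac:(lra)).
    replace ((u x ^ 2 - u x - G x) / u x ^ 2) with (- (- (u x ^ 2 - u x - G x) / (u x) ^ 2))
      by (field; lra).
    apply (is_derive_opp (fun y => / u y)), is_derive_inv; [apply u_riccati|]; lra.
  - assert (Huc := HT c ltac:(lra)). assert (HGc := HG c ltac:(lra)).
    assert (Hu1 := HT T1 ltac:(lra)). assert (Hu2 := HT (T1 + 4) ltac:(lra)).
    assert (Hrate : 1 / 2 <= (u c ^ 2 - u c - G c) / u c ^ 2).
    { apply Rmult_le_reg_r with (u c ^ 2); [nra|].
      replace ((u c ^ 2 - u c - G c) / u c ^ 2 * u c ^ 2) with (u c ^ 2 - u c - G c)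
        by (field; lra).
      nra. }
    assert (0 < / u (T1 + 4)) by (apply Rinv_0_lt_compat; lra).
    assert (/ u T1 <= 1) by (rewrite <- Rinv_1; apply Rinv_le_contravar; lra).
    nra.
Qed.

Lemma riccati_not_eventually_very_negative :
  ~ exists T, forall s, T < s -> u s <= - (2 * Rabs L + 4).
Proof.
  intros [T HT]. destruct riccati_forcing_eventually_le as [T0 HG].
  destruct (exists_gt3 T S0 T0) as [T1 HT1].
  pose proof (Rabs_pos L).
  assert (Hu1 := HT T1 ltac:(lra)).
  (* [u' >= 1] there, so [u] would climb above [- (2|L| + 4)] within time [1 - u T1] *)
  set (T2 := T1 - u T1 + 1).
  destruct (MVT_interval u (fun y => u y ^ 2 - u y - G y) T1 T2) as [c [Hc Heq]];
    [unfold T2; lra|intros; apply u_riccati; lra|].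
  assert (Huc := HT c ltac:(lra)). assert (HGc := HG c ltac:(lra)).
  assert (Hu2 := HT T2 ltac:(unfold T2; lra)).
  assert (Hrate : 1 <= u c ^ 2 - u c - G c) by nra.
  assert (T2 - T1 <= u T2 - u T1) by (rewrite Heq; unfold T2 in *; nra).
  unfold T2 in *. lra.
Qed.

Lemma riccati_converges : exists r, filterlim u (Rbar_locally p_infty) (locally r).
Proof.
  pose proof (Rabs_pos L). pose proof (Rle_abs L). pose proof (Rle_abs (- L)).
  rewrite Rabs_Ropp in *.
  set (K := 2 * Rabs L + 4).
  set (A := fun v => exists T, forall s, T < s -> v <= u s).
  destruct (completeness A) as [r [Hub Hlub]].
  { exists K. intros v [T HT]. apply Rnot_lt_le. intros Hv.
    apply riccati_not_eventually_large. exists T. intros s Hs. specialize (HT s Hs).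
    unfold K in Hv. lra. }
  { exists (- K).
    destruct (riccati_eventually_one_side (- K)) as [T [HT|HT]];
      [apply Rgt_not_eq; unfold K; nra| |].
    - exists T. exact HT.
    - exfalso. apply riccati_not_eventually_very_negative. exists T. exact HT. }
  exists r. apply filterlim_pinfty_locally. intros eps Heps.
  (* below [r]: an eventual lower bound close to [r]; above [r]: a non-root which [u] cannot
     eventually exceed, since it would then be an eventual lower bound *)
  assert (exists v, A v /\ r - eps / 2 < v) as [v [[Ta HTa] Hv]].
  { apply NNPP. intros Hn.
    enough (r <= r - eps / 2) by lra.
    apply Hlub. intros v Hv. apply Rnot_lt_le. intros Hlt. apply Hn. exists v. split; assumption. }
  destruct (exists_nonroot_in_interval L r (r + eps / 2)) as [v' [Hv' Hroot]]; [lra|].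
  destruct (riccati_eventually_one_side v' Hroot) as [Tb [HTb|HTb]].
  - exfalso. assert (v' <= r) by (apply Hub; exists Tb; exact HTb). lra.
  - exists (Rmax Ta Tb). intros s Hs.
    specialize (HTa s ltac:(pose proof (Rmax_l Ta Tb); lra)).
    specialize (HTb s ltac:(pose proof (Rmax_r Ta Tb); lra)).
    apply Rabs_def1; lra.
Qed.

Lemma riccati_rhs_limit (r : R) :
  filterlim u (Rbar_locally p_infty) (locally r) ->
  filterlim (fun s => u s ^ 2 - u s - G s) (Rbar_locally p_infty) (locally (r ^ 2 - r - L)).
Proof.
  intros Hu.
  change (is_lim (fun s => u s ^ 2 - u s - G s) p_infty (r ^ 2 - r - L)).
  apply is_lim_minus'; [apply is_lim_minus'; [|exact Hu]|exact G_limit].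
  apply (is_lim_ext (fun s => u s * u s)); [intros; ring|].
  replace (r ^ 2) with (r * r) by ring.
  exact (is_lim_mult u u p_infty r r Hu Hu I).
Qed.

Lemma riccati_limit_root (r : R) :
  filterlim u (Rbar_locally p_infty) (locally r) -> r ^ 2 - r - L = 0.
Proof.
  intros Hu.
  destruct (proj1 (filterlim_pinfty_locally u r) Hu 1 Rlt_0_1) as [T HT].
  apply (bounded_derivative_limit_zero u (fun s => u s ^ 2 - u s - G s)
           (Rmax S0 T) (r - 1) (r + 1)).
  - intros s Hs. apply u_riccati. pose proof (Rmax_l S0 T). lra.
  - intros s Hs. specialize (HT s ltac:(pose proof (Rmax_r S0 T); lra)).
    apply Rabs_def2 in HT. lra.
  - exact (riccati_rhs_limit r Hu).
Qed.

End Riccati.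

Lemma ln_sqr_bounds (y m M z : R) : 0 < m -> 0 < y -> m * y <= Rabs z <= M * y ->
  2 * (ln m + ln y) <= ln (z ^ 2) <= 2 * (ln M + ln y).
Proof.
  intros Hm Hy [Hlo Hhi].
  assert (Hz : 0 < Rabs z) by (pose proof (Rmult_lt_0_compat m y Hm Hy); lra).
  assert (HM : 0 < M) by (apply Rmult_lt_reg_r with y; lra).
  rewrite <- pow2_abs, ln_pow, <- !ln_mult by assumption. simpl INR.
  split; apply Rmult_le_compat_l; try lra; apply ln_le; auto; apply Rmult_lt_0_compat; auto.
Qed.

Lemma log_derivative_limit_of_power_bounds (P DP : R -> R) (n : nat) (m M ell : R) :
  0 < m ->
  at_right 0 (fun x => is_derive P x (DP x) /\ m * x ^ n <= Rabs (P x) <= M * x ^ n) ->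
  filterlim (fun x => x * DP x / P x) (at_right 0) (locally ell) ->
  ell = INR n.
Proof.
  intros Hm Hnear Hlim.
  destruct (proj1 (at_right0_iff _) Hnear) as [del [Hdel HP]].
  (* in the variable [t = - ln x], [ln (P^2) + 2 n t] is bounded with derivative [2 n - 2 x P'/P] *)
  set (k := fun t => ln (P (exp (- t)) ^ 2) + 2 * INR n * t).
  assert (Hx : forall t, - ln del < t -> 0 < exp (- t) < del).
  { intros t Ht. split; [apply exp_pos|].
    rewrite <- (exp_ln del) by exact Hdel. apply exp_increasing. lra. }
  assert (HPx : forall t, - ln del < t -> P (exp (- t)) <> 0).
  { intros t Ht. destruct (HP _ (Hx t Ht)) as [_ [Hlo _]].
    pose proof (pow_lt _ n (proj1 (Hx t Ht))). intros H0. rewrite H0, Rabs_R0 in Hlo. nra. }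
  enough (2 * INR n - 2 * ell = 0) by lra.
  apply (bounded_derivative_limit_zero k
           (fun t => 2 * INR n - 2 * (exp (- t) * DP (exp (- t)) / P (exp (- t))))
           (- ln del) (2 * ln m) (2 * ln M)).
  - intros t Ht. destruct (HP _ (Hx t Ht)) as [HD _]. specialize (HPx t Ht).
    unfold k. auto_derive.
    + split; [exists (DP (exp (- t))); exact HD|]. split; [|exact I].
      rewrite Rmult_1_r. apply Rsqr_pos_lt. exact HPx.
    + change (fun x => P x) with P. rewrite (is_derive_unique _ _ _ HD). field. exact HPx.
  - intros t Ht. destruct (HP _ (Hx t Ht)) as [_ Hb].
    assert (Hln : ln (exp (- t) ^ n) = - INR n * t)
      by (rewrite ln_pow, ln_exp by apply exp_pos; ring).
    pose proof (ln_sqr_bounds _ _ _ _ Hm (pow_lt _ n (proj1 (Hx t Ht))) Hb) as Hk.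
    rewrite Hln in Hk. unfold k. lra.
  - change (is_lim (fun t => 2 * INR n - 2 * (exp (- t) * DP (exp (- t)) / P (exp (- t))))
              p_infty (2 * INR n - 2 * ell)).
    apply is_lim_minus'; [apply is_lim_const|].
    exact (is_lim_scal_l _ 2 p_infty ell
             (filterlim_comp _ _ _ (fun t => exp (- t)) (fun x => x * DP x / P x) _ _ _
                filterlim_exp_opp_pinfty Hlim)).
Qed.

Lemma Ck_oc_ex_derive (k : nat) (f : R -> R) (x : R) :
  Ck_oc (S k) f -> 0 < x < 1 -> ex_derive f x.
Proof. intros [H _] Hx. exact (H 0%nat (Nat.lt_0_succ k) x Hx). Qed.

Lemma Ck_oc_ex_derive_Derive (f : R -> R) (x : R) :
  Ck_oc 2 f -> 0 < x < 1 -> ex_derive (Derive f) x.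
Proof. intros [H _] Hx. exact (H 1%nat (Nat.lt_succ_diag_r 1) x Hx). Qed.

Section Weight.

Variables w1 w2 : R -> R.
Hypothesis Hw1 : Ck_oc 2 w1.
Hypothesis Hw2 : Ck_oc 2 w2.

Lemma wt_ex_derive (x : R) : 0 < x < 1 -> ex_derive (wt w1 w2) x.
Proof. intros Hx. apply ex_derive_mult; eapply Ck_oc_ex_derive; eauto. Qed.

Lemma wt_ex_derive_Derive (x : R) : 0 < x < 1 -> ex_derive (Derive (wt w1 w2)) x.
Proof.
  intros Hx.
  apply (ex_derive_ext_loc (fun y => Derive w1 y * w2 y + w1 y * Derive w2 y)).
  - apply (locally_interval _ x 0 1); simpl; try lra.
    intros y Hy0 Hy1. symmetry.
    apply Derive_mult; eapply Ck_oc_ex_derive; eauto; simpl in *; lra.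
  - pose proof (Ck_oc_ex_derive _ _ x Hw1 Hx). pose proof (Ck_oc_ex_derive _ _ x Hw2 Hx).
    pose proof (Ck_oc_ex_derive_Derive _ x Hw1 Hx). pose proof (Ck_oc_ex_derive_Derive _ x Hw2 Hx).
    auto_derive. tauto.
Qed.

Hypothesis Hwpos : forall x, 0 < x < 1 -> 0 < wt w1 w2 x.

Lemma Wfun_riccati (s : R) : 0 < s ->
  is_derive (Wfun w1 w2) s
    ((Wfun w1 w2 s - 1) ^ 2 - (Wfun w1 w2 s - 1)
     - exp (- s) ^ 2 * Derive_n (wt w1 w2) 2 (exp (- s)) / wt w1 w2 (exp (- s))).
Proof.
  intros Hs.
  assert (Hx : 0 < exp (- s) < 1).
  { split; [apply exp_pos|]. rewrite <- exp_0. apply exp_increasing. lra. }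
  pose proof (Hwpos _ Hx).
  unfold Wfun. auto_derive.
  - repeat split; auto using wt_ex_derive, wt_ex_derive_Derive; lra.
  - change (Derive (fun x => Derive (wt w1 w2) x) (exp (- s)))
      with (Derive_n (wt w1 w2) 2 (exp (- s))).
    change (Derive (fun x => wt w1 w2 x)) with (Derive (wt w1 w2)).
    field. lra.
Qed.

Lemma Wfun_limits (L : R) :
  filterlim (fun x => x ^ 2 * Derive_n (wt w1 w2) 2 x / wt w1 w2 x) (at_right 0) (locally L) ->
  exists r,
    filterlim (Wfun w1 w2) (Rbar_locally p_infty) (locally (1 + r)) /\
    filterlim (Derive (Wfun w1 w2)) (Rbar_locally p_infty) (locally 0) /\
    filterlim (fun x => x * Derive (wt w1 w2) x / wt w1 w2 x) (at_right 0) (locally r).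
Proof.
  intros HL.
  set (u := fun t => Wfun w1 w2 t - 1).
  set (G := fun s => exp (- s) ^ 2 * Derive_n (wt w1 w2) 2 (exp (- s)) / wt w1 w2 (exp (- s))).
  assert (Hu' : forall s, 0 < s -> is_derive u s (u s ^ 2 - u s - G s)).
  { intros s Hs. rewrite <- (Rminus_0_r (u s ^ 2 - u s - G s)).
    apply (is_derive_minus (Wfun w1 w2) (fun _ => 1));
      [exact (Wfun_riccati s Hs)|exact (is_derive_const 1 s)]. }
  assert (HG : filterlim G (Rbar_locally p_infty) (locally L))
    by exact (filterlim_comp _ _ _ (fun s => exp (- s)) _ _ _ _ filterlim_exp_opp_pinfty HL).
  destruct (riccati_converges u G 0 L Hu' HG) as [r Hu].
  exists r. split; [|split].
  - change (is_lim (Wfun w1 w2) p_infty (1 + r)).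
    apply (is_lim_ext (fun t => u t + 1)); [intros t; unfold u; ring|].
    rewrite Rplus_comm. apply is_lim_plus'; [exact Hu|apply is_lim_const].
  - change (is_lim (Derive (Wfun w1 w2)) p_infty 0).
    rewrite <- (riccati_limit_root u G 0 L Hu' HG r Hu).
    apply (is_lim_ext_loc (fun s => u s ^ 2 - u s - G s)).
    + exists 0. intros s Hs. symmetry. exact (is_derive_unique _ _ _ (Wfun_riccati s Hs)).
    + exact (riccati_rhs_limit u G L HG r Hu).
  - apply (filterlim_ext_loc (fun x => u (- ln x))).
    + apply at_right0_iff. exists 1. split; [lra|]. intros x Hx.
      unfold u, Wfun. rewrite Ropp_involutive, exp_ln by lra. ring.
    + exact (filterlim_comp _ _ _ _ u _ _ _ filterlim_opp_ln_at_right0 Hu).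
Qed.

End Weight.

Lemma eventually_abs_succ_le_dist {T : Type} {F : (T -> Prop) -> Prop} {FF : Filter F}
  (f : T -> R) (l : Rbar) (lam : R) :
  filterlim f F (Rbar_locally l) -> Finite lam <> l ->
  exists c, 0 < c /\ F (fun x => Rabs (f x) + 1 <= c * Rabs (f x - lam)).
Proof.
  intros Hf Hl. pose proof (Rle_abs lam) as Hlam1. pose proof (Rle_abs (- lam)) as Hlam2.
  rewrite Rabs_Ropp in Hlam2.
  destruct l as [a| |].
  - assert (Ha : 0 < Rabs (a - lam)) by (apply Rabs_pos_lt; intros H0; apply Hl; f_equal; lra).
    set (e := Rabs (a - lam) / 2).
    assert (He : 0 < e) by (unfold e; lra).
    pose proof (Rabs_pos a).
    exists ((Rabs a + e + 1) / e). split; [apply Rdiv_lt_0_compat; lra|].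
    apply (filter_imp (fun x => Rabs (f x - a) < e));
      [|exact (Hf _ (locally_ball a (mkposreal e He)))].
    intros x Hx.
    assert (e <= Rabs (f x - lam)).
    { pose proof (Rabs_triang_inv (a - lam) (a - f x)) as Htri. rewrite Rabs_minus_sym in Hx.
      replace (a - lam - (a - f x)) with (f x - lam) in Htri by ring. unfold e in *. lra. }
    assert (Rabs (f x) <= Rabs a + e).
    { pose proof (Rabs_triang a (f x - a)) as Htri.
      replace (a + (f x - a)) with (f x) in Htri by ring. lra. }
    apply Rle_trans with (Rabs a + e + 1); [lra|].
    replace (Rabs a + e + 1) with ((Rabs a + e + 1) / e * e) at 1 by (field; lra).
    apply Rmult_le_compat_l; [left; apply Rdiv_lt_0_compat; lra|assumption].
  - exists 2. split; [lra|].
    apply (filter_imp (fun x => 2 * Rabs lam + 1 < f x));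
      [|exact (Hf _ (ex_intro _ _ (fun y Hy => Hy)))].
    intros x Hx. rewrite (Rabs_pos_eq (f x)), (Rabs_pos_eq (f x - lam)); lra.
  - exists 2. split; [lra|].
    apply (filter_imp (fun x => f x < - (2 * Rabs lam + 1)));
      [|exact (Hf _ (ex_intro _ _ (fun y Hy => Hy)))].
    intros x Hx. rewrite (Rabs_left (f x)), (Rabs_left (f x - lam)); lra.
Qed.

Lemma sqr_div_shift_diff_le (B D x lam lam0 beta c1 c2 : R) :
  0 <= B <= beta * x * (Rabs D + 1) ->
  Rabs D + 1 <= c1 * Rabs (D - lam) -> Rabs D + 1 <= c2 * Rabs (D - lam0) ->
  D <> lam -> D <> lam0 ->
  Rabs (B ^ 2 / (D - lam0) - B ^ 2 / (D - lam)) <= beta ^ 2 * c1 * c2 * Rabs (lam0 - lam) * x ^ 2.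
Proof.
  intros [HB0 HB] H1 H2 Hl Hl0.
  assert (Hq1 : 0 < Rabs (D - lam)) by (apply Rabs_pos_lt; lra).
  assert (Hq0 : 0 < Rabs (D - lam0)) by (apply Rabs_pos_lt; lra).
  replace (B ^ 2 / (D - lam0) - B ^ 2 / (D - lam))
    with (B ^ 2 * (lam0 - lam) / ((D - lam) * (D - lam0))) by (field; lra).
  rewrite Rabs_div, !Rabs_mult, (Rabs_pos_eq (B ^ 2)) by (try apply pow2_ge_0; nra).
  apply Rmult_le_reg_r with (Rabs (D - lam) * Rabs (D - lam0)); [nra|].
  replace (B ^ 2 * Rabs (lam0 - lam) / (Rabs (D - lam) * Rabs (D - lam0))
           * (Rabs (D - lam) * Rabs (D - lam0))) with (B ^ 2 * Rabs (lam0 - lam)) by (field; lra).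
  assert (HB2 : B ^ 2 <= (beta * x * (Rabs D + 1)) ^ 2) by (apply pow_incr; lra).
  assert (Hprod : (Rabs D + 1) ^ 2 <= c1 * Rabs (D - lam) * (c2 * Rabs (D - lam0))).
  { pose proof (Rabs_pos D). simpl. rewrite Rmult_1_r. apply Rmult_le_compat; lra. }
  pose proof (Rabs_pos (lam0 - lam)).
  assert (B ^ 2 <= beta ^ 2 * x ^ 2 * (c1 * Rabs (D - lam) * (c2 * Rabs (D - lam0)))).
  { eapply Rle_trans; [exact HB2|]. rewrite !Rpow_mult_distr.
    apply Rmult_le_compat_l; [nra|exact Hprod]. }
  nra.
Qed.

Lemma abs_div_le_inv_mul (y z M : R) :
  0 < y -> z <> 0 -> Rabs (y / z) <= M -> 0 < M /\ / M * y <= Rabs z.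
Proof.
  intros Hy Hz Hle.
  assert (Hzabs : 0 < Rabs z) by (apply Rabs_pos_lt; exact Hz).
  rewrite Rabs_div, (Rabs_pos_eq y) in Hle by lra.
  assert (Hyz : 0 < y / Rabs z) by (apply Rdiv_lt_0_compat; lra).
  split; [lra|].
  apply Rmult_le_reg_l with M; [lra|].
  rewrite <- Rmult_assoc, Rinv_r, Rmult_1_l by lra.
  apply Rmult_le_reg_r with (/ Rabs z); [apply Rinv_0_lt_compat; lra|].
  rewrite Rmult_assoc, Rinv_r, Rmult_1_r by lra. exact Hle.
Qed.

Section Pi.

Variables (p d w1 w2 : R -> R) (b : R -> C).

Lemma pit_eventually_le_sqr (d0 : Rbar) (beta lam0 lam M0 : R) :
  filterlim d (at_right 0) (Rbar_locally d0) ->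
  (forall x, 0 < x <= 1 -> Cmod (b x) / x <= beta * (Rabs (d x) + 1)) ->
  Finite lam0 <> d0 -> Finite lam <> d0 ->
  at_right 0 (fun x => Rabs (pit p d w1 w2 b x lam0 / x ^ 2) <= M0) ->
  exists C, at_right 0 (fun x => Rabs (pit p d w1 w2 b x lam) <= C * x ^ 2).
Proof.
  intros Hd0 Hb Hlam0 Hlam HM0.
  destruct (eventually_abs_succ_le_dist d d0 lam Hd0 Hlam) as [c1 [Hc1 Hsep1]].
  destruct (eventually_abs_succ_le_dist d d0 lam0 Hd0 Hlam0) as [c2 [Hc2 Hsep2]].
  exists (M0 + beta ^ 2 * c1 * c2 * Rabs (lam0 - lam)).
  generalize (filter_and _ _ at_right0_lt_1 (filter_and _ _ HM0 (filter_and _ _ Hsep1 Hsep2))).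
  apply filter_imp. intros x [Hx [Hm0 [Hs1 Hs2]]].
  assert (Hbeta : 0 <= beta).
  { pose proof (Hb 1 ltac:(lra)) as Hb1. pose proof (Cmod_ge_0 (b 1)). pose proof (Rabs_pos (d 1)).
    unfold Rdiv in Hb1. rewrite Rinv_1, Rmult_1_r in Hb1. nra. }
  assert (Hdl : d x <> lam)
    by (intros Heq; rewrite Heq, Rminus_diag, Rabs_R0 in Hs1; pose proof (Rabs_pos lam); lra).
  assert (Hdl0 : d x <> lam0)
    by (intros Heq; rewrite Heq, Rminus_diag, Rabs_R0 in Hs2; pose proof (Rabs_pos lam0); lra).
  assert (Hbx : 0 <= Cmod (b x) <= beta * x * (Rabs (d x) + 1)).
  { split; [apply Cmod_ge_0|]. pose proof (Hb x ltac:(lra)).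
    apply Rmult_le_reg_r with (/ x); [apply Rinv_0_lt_compat; lra|].
    replace (beta * x * (Rabs (d x) + 1) * / x) with (beta * (Rabs (d x) + 1)) by (field; lra).
    exact H. }
  pose proof (sqr_div_shift_diff_le _ _ _ _ _ _ _ _ Hbx Hs1 Hs2 Hdl Hdl0) as Hdiff.
  assert (Hp0 : Rabs (pit p d w1 w2 b x lam0) <= M0 * x ^ 2).
  { replace (pit p d w1 w2 b x lam0) with (pit p d w1 w2 b x lam0 / x ^ 2 * x ^ 2)
      by (field; lra).
    rewrite Rabs_mult, (Rabs_pos_eq (x ^ 2)) by (apply pow2_ge_0).
    apply Rmult_le_compat_r; [apply pow2_ge_0|exact Hm0]. }
  replace (pit p d w1 w2 b x lam)
    with (pit p d w1 w2 b x lam0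
          + (Cmod (b x) ^ 2 / (d x - lam0) - Cmod (b x) ^ 2 / (d x - lam))) by (unfold pit; ring).
  eapply Rle_trans; [apply Rabs_triang|]. lra.
Qed.

Hypothesis Hp : Ck_oc 2 p.
Hypothesis Hd : Ck_oc 2 d.
Hypothesis Hb : Ck_oc_C 2 b.
Hypothesis Hw1 : Ck_oc 2 w1.
Hypothesis Hw2 : Ck_oc 2 w2.

Lemma pit_ex_derive (lam x : R) : 0 < x < 1 -> w1 x <> 0 -> d x <> lam ->
  ex_derive (fun y => pit p d w1 w2 b y lam) x.
Proof.
  intros Hx Hw Hdl. destruct Hb as [Hbr Hbi].
  set (br := fun y => Re (b y)) in Hbr. set (bi := fun y => Im (b y)) in Hbi.
  apply (ex_derive_ext (fun y => w2 y / w1 y * p y - (br y ^ 2 + bi y ^ 2) / (d y - lam))).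
  { intros y. unfold pit. rewrite Cmod2_alt. reflexivity. }
  pose proof (Ck_oc_ex_derive _ _ x Hw1 Hx). pose proof (Ck_oc_ex_derive _ _ x Hw2 Hx).
  pose proof (Ck_oc_ex_derive _ _ x Hp Hx). pose proof (Ck_oc_ex_derive _ _ x Hd Hx).
  pose proof (Ck_oc_ex_derive _ _ x Hbr Hx). pose proof (Ck_oc_ex_derive _ _ x Hbi Hx).
  clearbody br bi. auto_derive. repeat split; auto. lra.
Qed.

Hypothesis Hwpos : forall x, 0 < x < 1 -> 0 < wt w1 w2 x.

Lemma rho_im_eq (lam x : R) : 0 < x < 1 -> d x <> lam ->
  rho_im p d w1 w2 b x lam
  = Derive (wt w1 w2) x / wt w1 w2 x * pit p d w1 w2 b x lam
    + Derive (fun y => pit p d w1 w2 b y lam) x.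
Proof.
  intros Hx Hdl. pose proof (Hwpos x Hx) as Hw.
  assert (Hw1x : w1 x <> 0) by (intros H0; unfold wt in Hw; rewrite H0 in Hw; lra).
  unfold rho_im.
  rewrite (Derive_mult (wt w1 w2) (fun y => pit p d w1 w2 b y lam) x);
    [|apply wt_ex_derive; assumption|apply pit_ex_derive; assumption].
  field. lra.
Qed.

Lemma Im_scaled_rhot (c : R -> C) (lam x : R) : d x <> lam -> pit p d w1 w2 b x lam <> 0 ->
  Im (RtoC x * rhot p d w1 w2 b c x lam / RtoC (pit p d w1 w2 b x lam))%C
  = x * rho_im p d w1 w2 b x lam / pit p d w1 w2 b x lam.
Proof.
  intros Hdl Hpi. unfold rhot, Cdiv, Cinv, Cmult, Cplus, Ci, RtoC, Im, Re; simpl.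
  field. split; [exact Hpi|lra].
Qed.

Lemma pit_log_derivative_limit (c : R -> C) (lam r : R) :
  at_right 0 (fun x => d x <> lam /\ pit p d w1 w2 b x lam <> 0) ->
  filterlim (fun x => x * Derive (wt w1 w2) x / wt w1 w2 x) (at_right 0) (locally r) ->
  forall rho0 : C,
  filterlim (fun x => (RtoC x * rhot p d w1 w2 b c x lam / RtoC (pit p d w1 w2 b x lam))%C)
    (at_right 0) (locally rho0) ->
  filterlim (fun x => x * Derive (fun y => pit p d w1 w2 b y lam) x / pit p d w1 w2 b x lam)
    (at_right 0) (locally (Im rho0 - r)).
Proof.
  intros Hnear Hw rho0 Hrho.
  apply (filterlim_ext_loc
           (fun x => Im (RtoC x * rhot p d w1 w2 b c x lam / RtoC (pit p d w1 w2 b x lam))%C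
                     - x * Derive (wt w1 w2) x / wt w1 w2 x)).
  - generalize (filter_and _ _ at_right0_lt_1 Hnear). apply filter_imp. intros x [Hx [Hdl Hpi]].
    pose proof (Hwpos x Hx).
    rewrite Im_scaled_rhot, rho_im_eq by assumption. field. split; lra.
  - apply filterlim_Rminus; [|exact Hw].
    exact (filterlim_comp _ _ _ _ Im _ _ _ Hrho (filterlim_Im rho0)).
Qed.

Lemma pit_log_derivative_limit_eq_two (lam M C ell : R) :
  at_right 0 (fun x => d x <> lam /\ pit p d w1 w2 b x lam <> 0) ->
  at_right 0 (fun x => Rabs (x ^ 2 / pit p d w1 w2 b x lam) <= M) ->
  at_right 0 (fun x => Rabs (pit p d w1 w2 b x lam) <= C * x ^ 2) ->
  filterlim (fun x => x * Derive (fun y => pit p d w1 w2 b y lam) x / pit p d w1 w2 b x lam)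
    (at_right 0) (locally ell) ->
  ell = 2.
Proof.
  intros Hnz Hlow Hup Hlim.
  destruct (proj1 (at_right0_iff _) (filter_and _ _ Hnz Hlow)) as [del [Hdel Hpt]].
  destruct (Hpt (del / 2) ltac:(lra)) as [[_ Hpi] Hle].
  destruct (abs_div_le_inv_mul _ _ _ (pow_lt (del / 2) 2 ltac:(lra)) Hpi Hle) as [HM _].
  apply (log_derivative_limit_of_power_bounds (fun y => pit p d w1 w2 b y lam)
           (Derive (fun y => pit p d w1 w2 b y lam)) 2 (/ M) C);
    [apply Rinv_0_lt_compat, HM| |exact Hlim].
  generalize (filter_and _ _ at_right0_lt_1 (filter_and _ _ (filter_and _ _ Hnz Hlow) Hup)).
  apply filter_imp. intros x [Hx [[[Hdl Hpix] Hlowx] Hupx]]. split; [|split; [|exact Hupx]].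
  - apply Derive_correct, pit_ex_derive; try assumption.
    intros Hw10. pose proof (Hwpos x Hx) as Hw. unfold wt in Hw. rewrite Hw10 in Hw. lra.
  - exact (proj2 (abs_div_le_inv_mul _ _ _ (pow_lt x 2 (proj1 Hx)) Hpix Hlowx)).
Qed.
End Pi.

Theorem lemma6p3
  (p d q w1 w2 : R -> R) (b c : R -> C)
  (Hp : Ck_oc 2 p) (Hd : Ck_oc 2 d) (Hb : Ck_oc_C 2 b) (Hc : Ck_oc_C 1 c)
  (Hq : Ck_oc 0 q) (Hw1 : Ck_oc 2 w1) (Hw2 : Ck_oc 2 w2)
  (Hppos : forall x, 0 < x <= 1 -> 0 < p x)
  (Hwpos : forall x, 0 < x < 1 -> 0 < wt w1 w2 x)
  (* (B1) *)
  (d0 : Rbar) (HB1 : filterlim d (at_right 0) (Rbar_locally d0))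
  (* (B2) *)
  (HB2 : exists beta gamma : R, 0 < beta /\ 0 < gamma /\
     forall x, 0 < x <= 1 ->
       Cmod (b x) / x <= beta * (Rabs (d x) + 1) /\
       Cmod (c x) <= gamma * (Rabs (d x) + 1))
  (* (B3a) *)
  (HB3a : exists lam : R, Finite lam <> d0 /\
     exists xl, 0 < xl < 1 /\ exists M : R, forall x, 0 < x <= xl ->
       d x <> lam /\ Rabs (pit p d w1 w2 b x lam / x ^ 2) <= M)
  (* (B3b) *)
  (HB3b : forall lam : R,
     ~ in_closure (Delta_img p d w1 w2 b) lam -> Finite lam <> d0 ->
     exists xl, 0 < xl < 1 /\ exists M : R, forall x, 0 < x <= xl ->
       d x <> lam /\ pit p d w1 w2 b x lam <> 0 /\
       Rabs (x ^ 2 / pit p d w1 w2 b x lam) <= M /\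
       Cmod (rhot p d w1 w2 b c x lam / RtoC x)%C <= M /\
       Cmod (kappat p d q w1 w2 b c x lam) <= M)
  (* (C1) *)
  (HC1 : forall lam : R,
     ~ in_closure (Delta_img p d w1 w2 b) lam -> Finite lam <> d0 ->
     (exists rho0 : C, filterlim
        (fun x => (RtoC x * rhot p d w1 w2 b c x lam / RtoC (pit p d w1 w2 b x lam))%C)
        (at_right 0) (locally rho0)) /\
     (exists kappa0 : C, filterlim
        (fun x => (RtoC (x ^ 2) * kappat p d q w1 w2 b c x lam
                   / RtoC (pit p d w1 w2 b x lam))%C)
        (at_right 0) (locally kappa0)))
  (* (C2) *)
  (HC2 : exists L : R, filterlim
     (fun x => x ^ 2 * Derive_n (wt w1 w2) 2 x / wt w1 w2 x) (at_right 0) (locally L)) :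
  forall lam : R,
    ~ in_closure (Delta_img p d w1 w2 b) lam -> Finite lam <> d0 ->
    filterlim (fun x => x * Derive (fun y => pit p d w1 w2 b y lam) x
                        / pit p d w1 w2 b x lam)
      (at_right 0) (locally 2) /\
    exists Winf : R,
      filterlim (Wfun w1 w2) (Rbar_locally p_infty) (locally Winf) /\
      filterlim (Derive (Wfun w1 w2)) (Rbar_locally p_infty) (locally 0) /\
      forall rho0 : C,
        filterlim
          (fun x => (RtoC x * rhot p d w1 w2 b c x lam / RtoC (pit p d w1 w2 b x lam))%C)
          (at_right 0) (locally rho0) ->
        Im rho0 = 1 + Winf.
Proof.
  intros lam Hnc Hnd.
  destruct HC2 as [L HL].
  destruct (Wfun_limits w1 w2 Hw1 Hw2 Hwpos L HL) as [r [HW [HdW Hlogw]]].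
  destruct (HB3b lam Hnc Hnd) as [xl [Hxl [M HM]]].
  assert (Hnz : at_right 0 (fun x => d x <> lam /\ pit p d w1 w2 b x lam <> 0))
    by (apply (at_right0_of_le _ xl); [lra|intros x Hx; apply HM in Hx; tauto]).
  assert (Hlow : at_right 0 (fun x => Rabs (x ^ 2 / pit p d w1 w2 b x lam) <= M))
    by (apply (at_right0_of_le _ xl); [lra|intros x Hx; apply HM in Hx; tauto]).
  destruct HB2 as [beta [gamma [_ [_ HB2]]]].
  destruct HB3a as [lam0 [Hlam0 [xl0 [Hxl0 [M0 HM0]]]]].
  destruct (pit_eventually_le_sqr p d w1 w2 b d0 beta lam0 lam M0 HB1
              (fun x Hx => proj1 (HB2 x Hx)) Hlam0 Hnd) as [C Hup].
  { apply (at_right0_of_le _ xl0); [lra|intros x Hx; apply HM0 in Hx; tauto]. }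
  assert (Hlogpi := pit_log_derivative_limit p d w1 w2 b Hp Hd Hb Hw1 Hw2 Hwpos c lam r Hnz Hlogw).
  assert (Him : forall rho0,
    filterlim (fun x => (RtoC x * rhot p d w1 w2 b c x lam / RtoC (pit p d w1 w2 b x lam))%C)
      (at_right 0) (locally rho0) -> Im rho0 - r = 2).
  { intros rho0 Hrho0. exact (pit_log_derivative_limit_eq_two p d w1 w2 b Hp Hd Hb Hw1 Hw2 Hwpos
                                lam M C _ Hnz Hlow Hup (Hlogpi rho0 Hrho0)). }
  destruct (HC1 lam Hnc Hnd) as [[rho0 Hrho0] _].
  split.
  - rewrite <- (Him rho0 Hrho0). exact (Hlogpi rho0 Hrho0).
  - exists (1 + r). split; [exact HW|split; [exact HdW|]].
    intros rho Hrho. pose proof (Him rho Hrho). lra.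
Qed.
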